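(* Let $0<p_1\le p_2\le1$ and let $X_1,X_2,Y_1,Y_2$ be independent random variables with $X_1$ geometric with success probability $p_1$, $X_2$ geometric with success probability $p_2$, and $Y_1,Y_2$ geometric with success probability $(p_1+p_2)/2$. Let $Z$ be a random variable taking nonnegative integer values, independent of $X_1,X_2,Y_1,Y_2$. Then for every positive integer $j$, $$\mathbb{P}(Z+X_1+X_2>j)\ge\mathbb{P}(Z+Y_1+Y_2>j).$$
   Context: A random variable $Y$ is geometric with success probability $p$ if $\mathbb{P}(Y=s)=(1-p)^{s-1}p$ for $s=1,2,\dots$. *)

From Stdlib Require Import Reals.
Open Scope R_scope.

Definition geom_pmf (p : R) (s : nat) : R :=
  match s with
  | O => 0
  | S k => (1 - p) ^ k * p
  end.

(* Law of the sum of two independent nat-valued random variables with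
   pmfs f and g: the discrete convolution  (f * g)(n) = sum_{k=0}^n f k g (n-k). *)
Definition conv (f g : nat -> R) (n : nat) : R :=
  sum_f_R0 (fun k => f k * g (n - k)%nat) n.

Definition is_pmf (q : nat -> R) : Prop :=
  (forall n, 0 <= q n) /\ infinite_sum q 1.

Definition tail_gt (w : nat -> R) (j : nat) : R :=
  1 - sum_f_R0 w j.

From Stdlib Require Import Reals Lra Lia Psatz.
Open Scope R_scope.

(* Conditioning on [Z], the distribution function of [Z + V + W] at [j] is
   [sum_{l <= j} q l * P(V + W <= j - l)], so since [q >= 0] it suffices to
   compare the distribution functions of the two sums of two geometrics
   pointwise. *)

Lemma sum_mult_l (A : nat -> R) (c : R) (N : nat) :
  sum_f_R0 (fun i => c * A i) N = c * sum_f_R0 A N.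
Proof. induction N as [|N IH]; simpl; [ring | rewrite IH; ring]. Qed.

Lemma sum_indicator0 (A : nat -> R) (N : nat) :
  sum_f_R0 (fun k => (if Nat.eq_dec k 0 then 1 else 0) * A k) N = A 0%nat.
Proof. induction N as [|N IH]; simpl; [ring | rewrite IH; ring]. Qed.

Lemma sum_triangle_swap (F : nat -> nat -> R) (j : nat) :
  sum_f_R0 (fun n => sum_f_R0 (fun k => F k (n - k)%nat) n) j
  = sum_f_R0 (fun k => sum_f_R0 (fun i => F k i) (j - k)) j.
Proof.
  induction j as [|j IH]; [reflexivity |].
  rewrite tech5, IH, tech5, tech5, Nat.sub_diag.
  assert (Hrows : sum_f_R0 (fun k => sum_f_R0 (fun i => F k i) (S j - k)) j
                = sum_f_R0 (fun k => sum_f_R0 (fun i => F k i) (j - k)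
                                     + F k (S j - k)%nat) j).
  { apply sum_eq; intros k Hk.
    replace (S j - k)%nat with (S (j - k)) by lia. apply tech5. }
  rewrite Hrows, plus_sum. simpl. ring.
Qed.

Lemma sum_conv_weighted (f g h : nat -> R) (j : nat) :
  sum_f_R0 (fun n => conv f g n * h (j - n)%nat) j
  = sum_f_R0 (fun k => f k * sum_f_R0 (fun i => g i * h (j - k - i)%nat) (j - k)) j.
Proof.
  transitivity (sum_f_R0 (fun n => sum_f_R0 (fun k =>
      f k * (g (n - k)%nat * h (j - k - (n - k))%nat)) n) j).
  { apply sum_eq; intros n Hn. unfold conv.
    rewrite Rmult_comm, <- sum_mult_l. apply sum_eq; intros k Hk.
    replace (j - k - (n - k))%nat with (j - n)%nat by lia. ring. }
  rewrite (sum_triangle_swap (fun k i => f k * (g i * h (j - k - i)%nat))).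
  apply sum_eq; intros k Hk. apply sum_mult_l.
Qed.

Lemma cdf_conv (f g : nat -> R) (j : nat) :
  sum_f_R0 (conv f g) j = sum_f_R0 (fun k => f k * sum_f_R0 g (j - k)) j.
Proof.
  transitivity (sum_f_R0 (fun n => conv f g n * 1) j).
  { apply sum_eq; intros n _. ring. }
  rewrite (sum_conv_weighted f g (fun _ => 1)).
  apply sum_eq; intros k _. f_equal. apply sum_eq; intros i _. ring.
Qed.

Lemma cdf_conv_conv (q g1 g2 : nat -> R) (j : nat) :
  sum_f_R0 (conv (conv q g1) g2) j
  = sum_f_R0 (fun l => q l * sum_f_R0 (conv g1 g2) (j - l)) j.
Proof.
  rewrite cdf_conv, (sum_conv_weighted q g1 (fun m => sum_f_R0 g2 m)).
  apply sum_eq; intros l _. rewrite cdf_conv. reflexivity.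
Qed.

Lemma cdf_geom (p : R) (r : nat) : sum_f_R0 (geom_pmf p) r = 1 - (1 - p) ^ r.
Proof. induction r as [|r IH]; simpl; [ring | rewrite IH; ring]. Qed.

(* Survival function [P(X1 + X2 > m)] of a sum of independent geometrics with
   failure probabilities [a] and [b], via the first-step recurrence: either
   [X1 > 1] (probability [a]) and the threshold drops by one, or [X1 = 1]
   and [X2 > m] (probability [b^m]). *)
Fixpoint geom2_survival (a b : R) (m : nat) : R :=
  match m with
  | O => 1
  | S m => a * geom2_survival a b m + (1 - a) * b ^ m
  end.

Lemma cdf_geom2 (p1 p2 : R) (m : nat) :
  sum_f_R0 (conv (geom_pmf p1) (geom_pmf p2)) m
  = 1 - geom2_survival (1 - p1) (1 - p2) m.
Proof.
  induction m as [|m IH]; [unfold conv; simpl; ring |].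
  rewrite cdf_conv in IH |- *. rewrite decomp_sum by lia. simpl Init.Nat.pred.
  (* [P(X1 = k + 1)] is [p1] at [k = 0] plus [(1 - p1) P(X1 = k)]. *)
  transitivity (0 + sum_f_R0 (fun k =>
      (if Nat.eq_dec k 0 then 1 else 0) * (p1 * sum_f_R0 (geom_pmf p2) (m - k))
      + (1 - p1) * (geom_pmf p1 k * sum_f_R0 (geom_pmf p2) (m - k))) m).
  { f_equal; [simpl; ring |]. apply sum_eq; intros k _.
    replace (S m - S k)%nat with (m - k)%nat by lia.
    destruct k; simpl; ring. }
  rewrite plus_sum, sum_indicator0, sum_mult_l, IH, Nat.sub_0_r, cdf_geom.
  simpl. ring.
Qed.

(* Chebyshev-type inequality: [x |-> x^m] is nondecreasing on [0, +oo). *)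
Lemma pow_diff_same_sign (a b : R) (m : nat) :
  0 <= a -> 0 <= b -> 0 <= (a - b) * (a ^ m - b ^ m).
Proof.
  intros Ha Hb. destruct (Rle_dec a b).
  - assert (a ^ m <= b ^ m) by (apply pow_incr; lra). nra.
  - assert (b ^ m <= a ^ m) by (apply pow_incr; lra). nra.
Qed.

Lemma pow_midpoint_convex (a b : R) (m : nat) :
  0 <= a -> 0 <= b -> 2 * ((a + b) / 2) ^ m <= a ^ m + b ^ m.
Proof.
  intros Ha Hb. induction m as [|m IH]; simpl; [lra |].
  pose proof (pow_diff_same_sign a b m Ha Hb).
  assert (0 <= (a + b) / 2) by lra. nra.
Qed.

Lemma geom2_survival_sym (a b : R) (m : nat) :
  (a - b) * geom2_survival a b m = (1 - b) * a ^ m - (1 - a) * b ^ m.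
Proof.
  induction m as [|m IH]; simpl; [ring |].
  transitivity (a * ((a - b) * geom2_survival a b m) + (a - b) * (1 - a) * b ^ m);
    [ring | rewrite IH; ring].
Qed.

Lemma geom2_survival_midpoint (a b : R) (m : nat) :
  0 <= a <= 1 -> 0 <= b <= 1 ->
  geom2_survival ((a + b) / 2) ((a + b) / 2) m <= geom2_survival a b m.
Proof.
  intros Ha Hb. set (c := (a + b) / 2).
  assert (Hc : 0 <= c <= 1) by (unfold c; lra).
  induction m as [|m IH]; simpl; [lra |].
  (* Symmetrising the step: the new term is the average of the two orders. *)
  assert (Hstep : a * geom2_survival a b m + (1 - a) * b ^ m
     = c * geom2_survival a b m + ((1 - a) * b ^ m + (1 - b) * a ^ m) / 2).
  { pose proof (geom2_survival_sym a b m). unfold c. lra. }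
  assert (Hterm : (1 - c) * c ^ m <= ((1 - a) * b ^ m + (1 - b) * a ^ m) / 2).
  { pose proof (pow_diff_same_sign a b m ltac:(lra) ltac:(lra)).
    pose proof (pow_midpoint_convex a b m ltac:(lra) ltac:(lra)) as Hconv.
    fold c in Hconv.
    assert (0 <= (1 - c) * (a ^ m + b ^ m - 2 * c ^ m)) by (apply Rmult_le_pos; lra).
    assert (((1 - a) * b ^ m + (1 - b) * a ^ m) / 2 - (1 - c) * c ^ m
       = ((1 - c) * (a ^ m + b ^ m - 2 * c ^ m) + (a - b) * (a ^ m - b ^ m) / 2) / 2)
      by (unfold c; field).
    lra. }
  rewrite Hstep. nra.
Qed.

Theorem corollaryB4 (p1 p2 : R) (q : nat -> R)
  (hp1 : 0 < p1) (hp12 : p1 <= p2) (hp2 : p2 <= 1)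
  (hq : is_pmf q) (j : nat) (hj : (1 <= j)%nat) :
  tail_gt (conv (conv q (geom_pmf p1)) (geom_pmf p2)) j
  >= tail_gt (conv (conv q (geom_pmf ((p1 + p2) / 2)))
                   (geom_pmf ((p1 + p2) / 2))) j.
Proof.
  destruct hq as [hq_nonneg _]. unfold tail_gt. apply Rle_ge.
  apply Rplus_le_compat_l, Ropp_le_contravar.
  rewrite !cdf_conv_conv. apply sum_Rle; intros l _.
  apply Rmult_le_compat_l; [apply hq_nonneg |].
  rewrite !cdf_geom2.
  replace (1 - (p1 + p2) / 2) with (((1 - p1) + (1 - p2)) / 2) by field.
  pose proof (geom2_survival_midpoint (1 - p1) (1 - p2) (j - l)
                ltac:(lra) ltac:(lra)).
  lra.
Qed.
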